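(* Let $A = (a_{ij}) \in \mathbb{R}^{p \times n}$, let $1 \leq k \leq p$, and let $\widetilde{x} \in \{0,1\}^n$. Let $P \subseteq \{1, \ldots, p\}$ be a subset with $|P| \geq k$ such that $Q_k(A\widetilde{x}) = \min_{i \in P} \sum_{j=1}^n a_{ij}\widetilde{x}_j$. Then for all $x \in \{0,1\}^n$, $$Q_k(Ax) \geq Q_k(A\widetilde{x}) + \sum_{j : \widetilde{x}_j = 1} (x_j - 1)\max_{i \in P} a_{ij} + \sum_{j : \widetilde{x}_j = 0} x_j \min_{i \in P} a_{ij},$$ and this inequality holds with equality for $x = \widetilde{x}$.
   Context: For $y \in \mathbb{R}^p$ and an integer $1 \leq k \leq p$, $Q_k(y)$ denotes the $k$-th largest entry of $y$ (entries counted with multiplicity). *)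

From HB Require Import structures.
From mathcomp Require Import all_boot all_order all_algebra.
Set Implicit Arguments. Unset Strict Implicit. Unset Printing Implicit Defensive.
Import Order.TTheory GRing.Theory Num.Theory.
Local Open Scope ring_scope.

(* Minimum / maximum of a nonempty list of reals (0 on the empty list,
   which never occurs in the statement since |P| >= k >= 1). *)
Definition smin (R : realDomainType) (s : seq R) : R :=
  if s is x :: s' then foldr Num.min x s' else 0.
Definition smax (R : realDomainType) (s : seq R) : R :=
  if s is x :: s' then foldr Num.max x s' else 0.

(* Q_k(y): the k-th largest entry of y (1-based k, with multiplicity):
   sort the entries in nonincreasing order and take the k-th one. *)
Definition Qk (R : realDomainType) (p : nat) (k : nat) (y : 'I_p -> R) : R :=
  nth 0 (sort (fun a b : R => b <= a) [seq y i | i <- enum 'I_p]) k.-1.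

Definition Aprod (R : realDomainType) (p n : nat) (A : 'M[R]_(p, n))
  (x : 'I_n -> bool) : 'I_p -> R :=
  fun i => \sum_(j < n) A i j * (x j)%:R.

(* For a row i in P, bounding a_ij above by the column maximum over P where
   x~_j = 1 and below by the column minimum where x~_j = 0 shows that (Ax)_i
   dominates the right-hand side with Q_k(Ax~) replaced by (Ax~)_i, which is
   at least min_{i in P} (Ax~)_i = Q_k(Ax~).  So the |P| >= k entries of Ax
   indexed by P all dominate the right-hand side, hence so does the k-th
   largest entry of Ax. *)

From HB Require Import structures.
From mathcomp Require Import all_boot all_order all_algebra.
From mathcomp Require Import zify lra.
Set Implicit Arguments. Unset Strict Implicit. Unset Printing Implicit Defensive.
Import Order.TTheory GRing.Theory Num.Theory.
Local Open Scope ring_scope.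

(* Some entry >= c lies beyond the first k of the sorted list, and all of
   those are bounded by the k-th one. *)
Lemma le_nth_sort_ge d (T : orderType d) (x0 c : T) (s : seq T) k :
  (k < count (>= c)%O s)%N -> (c <= nth x0 (sort >=%O s) k)%O.
Proof.
set t := sort _ s; rewrite -(count_sort >=%O) -/t => k_lt_count.
have k_lt_t : (k < size t)%N by apply: leq_trans k_lt_count (count_size _ _).
have /hasP[y y_in c_le_y] : has (>= c)%O (drop k t).
  have := count_size (>= c)%O (take k t).
  rewrite has_count size_take k_lt_t.
  by rewrite -(cat_take_drop k t) count_cat in k_lt_count; lia.
have t_sorted : sorted >=%O t by apply: sort_sorted; apply: ge_total.
move: y_in (drop_sorted k t_sorted); rewrite (drop_nth x0 k_lt_t) inE /=.
case/predU1P => [<- // | y_in] /(order_path_min ge_trans) /allP y_le.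
exact: le_trans c_le_y (y_le y y_in).
Qed.

Lemma count_enumT (T : finType) (a : pred T) : count a (enum T) = #|a|.
Proof. by rewrite cardE -size_filter /enum_mem filter_predT. Qed.

Lemma Qk_ge (R : realDomainType) (p k : nat) (y : 'I_p -> R) (P : {pred 'I_p})
    (c : R) :
  (0 < k)%N -> (k <= #|P|)%N -> {in P, forall i, c <= y i} -> c <= Qk k y.
Proof.
case: k => [// | k] _ k_lt_P c_le_y; apply: le_nth_sort_ge.
rewrite count_map count_enumT; apply: leq_trans k_lt_P _.
by apply/subset_leq_card/subsetP => i /c_le_y.
Qed.

Lemma smin_le (R : realDomainType) (s : seq R) x : x \in s -> smin s <= x.
Proof.
case: s => [// | a s]; elim: s a => [| b s IHs] a; first by rewrite inE => /eqP ->.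
rewrite /= ge_min !inE => /or3P[/eqP<- | /eqP-> | x_in].
- by apply/orP; right; apply: IHs; rewrite mem_head.
- by rewrite lexx.
- by apply/orP; right; apply: IHs; rewrite inE x_in orbT.
Qed.

Lemma le_smax (R : realDomainType) (s : seq R) x : x \in s -> x <= smax s.
Proof.
case: s => [// | a s]; elim: s a => [| b s IHs] a; first by rewrite inE => /eqP ->.
rewrite /= le_max !inE => /or3P[/eqP<- | /eqP-> | x_in].
- by apply/orP; right; apply: IHs; rewrite mem_head.
- by rewrite lexx.
- by apply/orP; right; apply: IHs; rewrite inE x_in orbT.
Qed.

Lemma bool_sum_lower_bound (R : realDomainType) (I : finType) (a lo hi : I -> R)
    (xt x : I -> bool) :
  (forall j, lo j <= a j) -> (forall j, a j <= hi j) ->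
  \sum_j a j * (xt j)%:R + \sum_(j | xt j) ((x j)%:R - 1) * hi j
    + \sum_(j | ~~ xt j) (x j)%:R * lo j
  <= \sum_j a j * (x j)%:R.
Proof.
move=> lo_le_a a_le_hi; rewrite (bigID xt) [leRHS](bigID xt) /=.
rewrite -addrA addrACA -!big_split /=; apply: lerD; apply: ler_sum => j xt_j.
  by have := a_le_hi j; rewrite xt_j; case: (x j) => /=; lra.
by have := lo_le_a j; rewrite (negbTE xt_j); case: (x j) => /=; lra.
Qed.

Theorem theorem8 (R : realFieldType) (p n : nat) (A : 'M[R]_(p, n)) (k : nat)
  (xt : 'I_n -> bool) (P : {set 'I_p}) :
  (1 <= k)%N -> (k <= p)%N -> (k <= #|P|)%N ->
  Qk k (Aprod A xt) = smin [seq \sum_(j < n) A i j * (xt j)%:R | i <- enum P] ->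
  (forall x : 'I_n -> bool,
     Qk k (Aprod A xt)
       + \sum_(j < n | xt j) ((x j)%:R - 1) * smax [seq A i j | i <- enum P]
       + \sum_(j < n | ~~ xt j) (x j)%:R * smin [seq A i j | i <- enum P]
     <= Qk k (Aprod A x))
  /\
  Qk k (Aprod A xt)
    + \sum_(j < n | xt j) ((xt j)%:R - 1) * smax [seq A i j | i <- enum P]
    + \sum_(j < n | ~~ xt j) (xt j)%:R * smin [seq A i j | i <- enum P]
  = Qk k (Aprod A xt).
Proof.
move=> k_gt0 _ k_le_P Qk_xt; split=> [x | ].
- apply: (Qk_ge (P := P) k_gt0 k_le_P) => i i_in_P.
  have i_in : i \in enum P by rewrite mem_enum.
  pose lo j := smin [seq A r j | r <- enum P].
  pose hi j := smax [seq A r j | r <- enum P].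
  have lo_le_A j : lo j <= A i j by rewrite smin_le // (map_f (fun r => A r j)).
  have A_le_hi j : A i j <= hi j by rewrite le_smax // (map_f (fun r => A r j)).
  apply: le_trans _ (bool_sum_lower_bound xt x lo_le_A A_le_hi).
  by rewrite !lerD2r Qk_xt smin_le // (map_f (fun r => Aprod A xt r)).
- rewrite [X in _ + X + _]big1 ?[X in _ + X]big1 ?addr0 // => j.
    by move/negbTE->; rewrite mul0r.
  by move->; rewrite subrr mul0r.
Qed.
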